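(* For every expression $e\in\mathrm{Exp}$, the set $\langle e\rangle_\partial$ of states reachable from $e$ in the derivative automaton $(\mathrm{Exp},\partial)$ is finite, and $|\langle e\rangle_\partial|\le \#(e)$, where $\#:\mathrm{Exp}\to\mathbb N$ is defined by $\#(b)=1$, $\#(v)=1$, $\#(p)=2$, $\#(e\oplus_{r,s}f)=\#(e)+\#(f)$, $\#(e+_bf)=\#(e)+\#(f)$, $\#(e;f)=\#(e)+\#(f)$, $\#(e^{(b)})=\#(e)$.
   Context: Fix a finite set $T$ of primitive tests, a set $\mathrm{Act}$ of atomic actions, a set $\mathrm{Out}$ of return values, and a semiring $(S,+,\cdot,0,1)$ that is positive ($x+y=0\Rightarrow x=y=0$), refinement (whenever $x+y=z+w$ there exist $s,t,u,v\in S$ with $s+t=x$, $s+u=z$, $u+v=y$, $t+v=w$) and Conway (equipped with an operation ${}^*:S\to S$ with $(a+b)^*=a^*(ba^* )^*$ and $(ab)^*=1+a(ba)^*b$ for all $a,b$). Tests: $b,c\in\mathrm{BExp}::=\mathtt{0}\mid\mathtt{1}\mid t\ (t\in T)\mid\bar b\mid b+c\mid bc$ (false, true, negation, disjunction, conjunction; $\mathtt 0,\mathtt 1$ are distinct from the semiring elements $0,1$). $\mathrm{At}$ is the finite set of atoms (minimal nonzero elements of the free Boolean algebra on $T$, i.e. of $\mathrm{BExp}$ modulo Boolean equivalence); atoms are also regarded as tests; $\alpha\le b$ means $\alpha$ entails $b$. Expressions: $e,f\in\mathrm{Exp}::= p\ (p\in\mathrm{Act})\mid b\ (b\in\mathrm{BExp})\mid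 e+_b f\mid e;f\mid e^{(b)}\mid v\ (v\in\mathrm{Out})\mid e\oplus_{r,s} f\ (r,s\in S)$ (if-then-else, sequencing, while loop, return, weighted choice). For a set $X$, $\mathcal M_\omega(X)$ is the set of finitely supported maps $X\to S$ with pointwise sum and scalar multiplication; $\delta_x$ sends $x$ to $1$ and all else to $0$. The derivative automaton has transition map $\partial:\mathrm{Exp}\to\mathcal M_\omega(\{\mathsf{acc},\mathsf{rej}\}+\mathrm{Out}+\mathrm{Act}\times\mathrm{Exp})^{\mathrm{At}}$, written $\partial(e)_\alpha$, defined by: $\partial(b)_\alpha=\delta_{\mathsf{acc}}$ if $\alpha\le b$ and $\delta_{\mathsf{rej}}$ otherwise; $\partial(v)_\alpha=\delta_v$; $\partial(p)_\alpha=\delta_{(p,\mathtt 1)}$; $\partial(e+_bf)_\alpha=\partial(e)_\alpha$ if $\alpha\le b$ and $\partial(f)_\alpha$ otherwise; $\partial(e\oplus_{r,s}f)_\alpha=r\,\partial(e)_\alpha+s\,\partial(f)_\alpha$; $\partial(e;f)_\alpha=\sum_x\partial(e)_\alpha(x)\,c_{\alpha,f}(x)$ where $c_{\alpha,f}(\mathsf{acc})=\partial(f)_\alpha$, $c_{\alpha,f}(x)=\delta_x$ for $x\in\{\mathsf{rej}\}\cup\mathrm{Out}$, $c_{\alpha,f}(p,e')=\delta_{(p,e';f)}$; and $\partial(e^{(b)})_\alpha(x)$ equals $1$ if $x=\mathsf{acc}$ and $\alpha\le\bar b$; $\partial(e)_\alpha(\mathsf{acc})^*\partial(e)_\alpha(x)$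 if $x\in\{\mathsf{rej}\}\cup\mathrm{Out}$ and $\alpha\le b$; $\partial(e)_\alpha(\mathsf{acc})^*\partial(e)_\alpha(p,e')$ if $x=(p,e';e^{(b)})$ and $\alpha\le b$; and $0$ otherwise. $\langle e\rangle_\partial$ is the smallest set containing $e$ and containing $g'$ whenever it contains $g$ and $\partial(g)_\alpha(p,g')\neq 0$ for some $\alpha,p$. *)

From mathcomp Require Import all_boot all_algebra.
From Stdlib Require Import ClassicalEpsilon List.
Set Implicit Arguments. Unset Strict Implicit. Unset Printing Implicit Defensive.
Import GRing.Theory.
Local Open Scope ring_scope.

Definition positive_sr (S : pzSemiRingType) : Prop :=
  forall x y : S, x + y = 0 -> x = 0 /\ y = 0.

Definition refinement_sr (S : pzSemiRingType) : Prop :=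
  forall x y z w : S, x + y = z + w ->
    exists s t u v : S, [/\ s + t = x, s + u = z, u + v = y & t + v = w].

Definition conway_sr (S : pzSemiRingType) (star : S -> S) : Prop :=
  (forall a b : S, star (a + b) = star a * star (b * star a)) /\
  (forall a b : S, star (a * b) = 1 + a * star (b * a) * b).

Inductive BExp (T : Type) : Type :=
| BFalse | BTrue | BPrim of T | BNeg of BExp T
| BOr of BExp T & BExp T | BAnd of BExp T & BExp T.
Arguments BFalse {T}. Arguments BTrue {T}.

(* Atoms of the free Boolean algebra on a finite T are identified with
   valuations T -> bool; alpha <= b iff b evaluates to true under alpha. *)
Definition atom (T : finType) := {ffun T -> bool}.

Fixpoint beval (T : finType) (a : atom T) (b : BExp T) : bool :=
  match b with
  | BFalse => false
  | BTrue => true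
  | BPrim t => a t
  | BNeg c => ~~ beval a c
  | BOr c d => beval a c || beval a d
  | BAnd c d => beval a c && beval a d
  end.

Definition atom_le (T : finType) (a : atom T) (b : BExp T) : Prop := beval a b.

Inductive Exp (T : finType) (Act Out : Type) (S : pzSemiRingType) : Type :=
| EAct of Act
| ETest of BExp T
| EIf of Exp T Act Out S & BExp T & Exp T Act Out S
| ESeq of Exp T Act Out S & Exp T Act Out S
| ELoop of Exp T Act Out S & BExp T
| ERet of Out
| EChoice of Exp T Act Out S & S & S & Exp T Act Out S.

Arguments EAct {T Act Out S}. Arguments ETest {T Act Out S}. Arguments ERet {T Act Out S}.

Fixpoint expsize T Act Out S (e : @Exp T Act Out S) : nat :=
  match e with
  | EAct _ => 2
  | ETest _ => 1
  | ERet _ => 1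
  | EIf e b f => expsize e + expsize f
  | ESeq e f => expsize e + expsize f
  | ELoop e b => expsize e
  | EChoice e r s f => expsize e + expsize f
  end.

Inductive Lab (Act Out E : Type) : Type :=
| Acc | Rej | LOut of Out | LTr of Act & E.
Arguments Acc {Act Out E}. Arguments Rej {Act Out E}.
Arguments LOut {Act Out E}. Arguments LTr {Act Out E}.

(* elements of M_w(X) are represented pointwise as maps X -> S
   (every map produced below is finitely supported). *)
Definition dec (P : Prop) : bool := if excluded_middle_informative P then true else false.

Section Deriv.
Variables (T : finType) (Act Out : Type) (S : pzSemiRingType) (star : S -> S).
Local Notation Exp := (@Exp T Act Out S).
Local Notation X := (Lab Act Out Exp).

Fixpoint deriv (e : Exp) (a : atom T) (x : X) {struct e} : S :=
  match e with
  | ETest b => match x with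
               | Acc => if beval a b then 1 else 0
               | Rej => if beval a b then 0 else 1
               | _ => 0 end
  | ERet v => match x with LOut w => if dec (w = v) then 1 else 0 | _ => 0 end
  | EAct p => match x with
              | LTr q g => if dec (q = p /\ g = ETest BTrue) then 1 else 0
              | _ => 0 end
  | EIf e b f => if beval a b then deriv e a x else deriv f a x
  | EChoice e r s f => r * deriv e a x + s * deriv f a x
  | ESeq e f =>
      (* sum_y d(e)(y) * c_{a,f}(y)(x) *)
      deriv e a Acc * deriv f a x +
      match x with
      | Acc => 0
      | Rej => deriv e a Rej
      | LOut v => deriv e a (LOut v)
      | LTr p g => match g with
                   | ESeq e' f' => if dec (f' = f) then deriv e a (LTr p e') else 0
                   | _ => 0 end
      end
  | ELoop e b =>
      match x with
      | Acc => if beval a (BNeg b) then 1 else 0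
      | Rej => if beval a b then star (deriv e a Acc) * deriv e a Rej else 0
      | LOut v => if beval a b then star (deriv e a Acc) * deriv e a (LOut v) else 0
      | LTr p g => match g with
                   | ESeq e' l => if beval a b && dec (l = ELoop e b)
                                  then star (deriv e a Acc) * deriv e a (LTr p e')
                                  else 0
                   | _ => 0 end
      end
  end.

Inductive reach (e : Exp) : Exp -> Prop :=
| reach_refl : reach e e
| reach_step g (a : atom T) (p : Act) g' :
    reach e g -> deriv g a (LTr p g') <> 0 -> reach e g'.
End Deriv.

(* Every state reachable from e by one or more action transitions lies in the
   syntactically computed list [derivs e] (the Antimirov-style partial
   derivatives of e): a transition of e can only land in [derivs e], and
   [derivs] is transitive, in that the partial derivatives of a partial
   derivative of e are again partial derivatives of e.  Since [derivs e] has
   fewer than #(e) entries, the reachable states, e included, number at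
   most #(e). *)

From Pilot Require Import Defs.
From mathcomp Require Import all_boot all_algebra.
From Stdlib Require Import List ClassicalEpsilon Lia.
From mathcomp Require Import zify.
Set Implicit Arguments. Unset Strict Implicit. Unset Printing Implicit Defensive.
Import GRing.Theory.
Local Open Scope ring_scope.

Lemma decP (P : Prop) : reflect P (dec P).
Proof. by rewrite /dec; case: excluded_middle_informative => ?; constructor. Qed.

Lemma NoDup_enum_of_incl (A : Type) (P : A -> Prop) (L : list A) :
  (forall x, P x -> In x L) ->
  exists l, [/\ NoDup l, forall x, P x <-> In x l & (length l <= length L)%N].
Proof.
move=> PL; pose eqA x y := excluded_middle_informative (x = y :> A).
exists (nodup eqA (filter (fun x => dec (P x)) L)).
have memP x : P x <-> In x (nodup eqA (filter (fun x => dec (P x)) L)).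
  rewrite nodup_In filter_In; split=> [Px | [_ /decP //]].
  by split; [exact: PL | apply/decP].
split=> //; first exact: NoDup_nodup.
by apply/leP/NoDup_incl_length; [exact: NoDup_nodup | move=> x /memP /PL].
Qed.

Section PartialDerivatives.
Variables (T : finType) (Act Out : Type) (S : pzSemiRingType) (star : S -> S).
Local Notation Exp := (@Exp T Act Out S).
Local Notation deriv := (@Defs.deriv T Act Out S star).

Fixpoint derivs (e : Exp) : list Exp :=
  match e with
  | EAct _ => ETest BTrue :: nil
  | ETest _ | ERet _ => nil
  | EIf e _ f | EChoice e _ _ f => derivs e ++ derivs f
  | ESeq e f => List.map (fun d => ESeq d f) (derivs e) ++ derivs f
  | ELoop e b => List.map (fun d => ESeq d (ELoop e b)) (derivs e)
  end.

Lemma derivs_length (e : Exp) : (length (derivs e) < expsize e)%N.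
Proof.
elim: e => //= [e1 IH1 b e2 IH2 | e1 IH1 e2 IH2 | e1 IH1 b | e1 IH1 r s e2 IH2];
  rewrite ?length_app ?length_map; lia.
Qed.

Lemma deriv_tr_eq0 (e : Exp) a p g :
  ~ In g (derivs e) -> deriv e a (LTr p g) = 0.
Proof.
elim: e g => /= [q | b | e1 IH1 b e2 IH2 | e1 IH1 e2 IH2 | e1 IH1 b | v
                | e1 IH1 r s e2 IH2] g; rewrite ?in_app_iff.
- by move=> notin; case: decP => // -[_ eq_g]; case: notin; left.
- by [].
- by move=> /Decidable.not_or [/IH1 -> /IH2 ->]; case: beval.
- move=> /Decidable.not_or [notin1 /IH2 ->]; rewrite mulr0 add0r.
  case: g notin1 => // d f notin1; case: decP => // eq_f; rewrite {f}eq_f in notin1.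
  by apply: IH1 => in1; apply: notin1; apply: (in_map (fun d => ESeq d e2)).
- case: g => // d l notin; case: decP; rewrite ?andbF // => eq_l.
  rewrite {l}eq_l in notin; rewrite andbT IH1 ?mulr0 ?if_same // => in1.
  by apply: notin; apply: (in_map (fun d => ESeq d (ELoop e1 b))).
- by [].
- by move=> /Decidable.not_or [/IH1 -> /IH2 ->]; rewrite !mulr0 addr0.
Qed.

Lemma in_derivs_of_tr (e : Exp) a p g :
  deriv e a (LTr p g) <> 0 -> In g (derivs e).
Proof. by case: (decP (In g (derivs e))) => // /(@deriv_tr_eq0 e a p g). Qed.

Lemma derivs_trans (e d : Exp) : In d (derivs e) -> incl (derivs d) (derivs e).
Proof.
elim: e d => /= [q | b | e1 IH1 b e2 IH2 | e1 IH1 e2 IH2 | e1 IH1 b | v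
                | e1 IH1 r s e2 IH2] d; rewrite ?in_app_iff.
- by case=> // <-; apply: incl_nil_l.
- by [].
- by case=> [/IH1 | /IH2] sub; [apply: incl_appl | apply: incl_appr].
- case=> [/in_map_iff [d1 [<- /IH1 sub1]] | /IH2 sub2]; last exact: incl_appr.
  by apply: incl_app; [apply/incl_appl/incl_map | apply/incl_appr/incl_refl].
- move=> /in_map_iff [d1 [<- /IH1 sub1]] /=.
  by apply: incl_app; [apply: incl_map | apply: incl_refl].
- by [].
- by case=> [/IH1 | /IH2] sub; [apply: incl_appl | apply: incl_appr].
Qed.

Definition states (e : Exp) : list Exp := e :: derivs e.

Lemma states_length (e : Exp) : (length (states e) <= expsize e)%N.
Proof. exact: derivs_length. Qed.

Lemma reach_states (e g : Exp) : reach star e g -> In g (states e).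
Proof.
elim=> {g} [|g0 a p g _ in0 /in_derivs_of_tr tr]; first by left.
by right; case: in0 tr => [<- // | /derivs_trans]; apply.
Qed.

End PartialDerivatives.

Theorem mainTheorem1 (T : finType) (Act Out : Type) (S : pzSemiRingType)
  (star : S -> S)
  (Hpos : positive_sr S) (Href : refinement_sr S) (Hconw : conway_sr star)
  (e : Exp T Act Out S) :
  exists l : list (Exp T Act Out S),
    List.NoDup l /\
    (forall g, reach star e g <-> List.In g l) /\
    (length l <= expsize e)%N.
Proof.
have [l [nodup_l mem_l len_l]] := NoDup_enum_of_incl (fun g => @reach_states _ _ _ _ star e g).
exists l; split=> //; split=> //.
exact: leq_trans len_l (states_length e).
Qed.
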